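(* Let $n\ge 3$, let $\pi\in S_{n-2}$, and let $\tau\in S_n$ be the permutation $\tau=n\,(\pi_1+1)(\pi_2+1)\cdots(\pi_{n-2}+1)\,1$ (in one-line notation). Then $\pi$ is shallow if and only if $\tau$ is shallow.
   Context: For $\pi\in S_n$: $D(\pi)=\sum_{i}|\pi_i-i|$, $I(\pi)$ is the number of inversions, $T(\pi)=n-\mathrm{cyc}(\pi)$ with $\mathrm{cyc}$ the number of cycles in the disjoint cycle decomposition; $\pi$ is shallow if $I(\pi)+T(\pi)=D(\pi)$. *)

From mathcomp Require Import all_boot all_order all_algebra all_fingroup.
Set Implicit Arguments. Unset Strict Implicit. Unset Printing Implicit Defensive.

(* Permutations of 'I_n = {0,...,n-1} (0-indexed version of {1,...,n}). *)

Definition displacement n (p : 'S_n) : nat :=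
  \sum_(i < n) `|(p i : nat) - (i : nat)|%N.

Definition inversions n (p : 'S_n) : nat :=
  #|[set ij : 'I_n * 'I_n | (ij.1 < ij.2) && (p ij.2 < p ij.1)]|.

Definition ncycles n (p : 'S_n) : nat := #|porbits p|.
Definition reflength n (p : 'S_n) : nat := n - ncycles p.

Definition shallow n (p : 'S_n) : bool :=
  inversions p + reflength p == displacement p.

From mathcomp Require Import all_boot all_order all_algebra all_fingroup.
From mathcomp Require Import zify.
Set Implicit Arguments. Unset Strict Implicit. Unset Printing Implicit Defensive.

(* tau puts the maximum first, the minimum last and a shifted copy of pi in
   between.  The inner positions reproduce the statistics of pi, while the ends
   add 2(n-1) to D and, since every pair involving an end is an inversion,
   2n-3 to I.  The cycles of tau are the shifted cycles of pi together with the
   transposition of the ends, so T grows by 1, and both sides of I + T = D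
   grow by 2(n-1). *)

Definition shift1 {n} (i : 'I_n) : 'I_n.+2 := lift ord0 (widen_ord (leqnSn n) i).

Lemma shift1E n (i : 'I_n) : shift1 i = i.+1 :> nat.
Proof. by []. Qed.

Lemma shift1_inj n : injective (@shift1 n).
Proof. by move=> i j /(congr1 val) [] /val_inj. Qed.

Lemma shift1_onto n (x : 'I_n.+3) : x != ord0 -> x != ord_max ->
  x = shift1 (inord x.-1).
Proof.
rewrite -!(inj_eq val_inj) /= => x_neq0 x_neq_max; have x_lt := ltn_ord x.
by apply/val_inj; rewrite /= /bump add1n inordK; lia.
Qed.

Lemma big_ord_shift1 n (F : 'I_n.+2 -> nat) :
  \sum_(i < n.+2) F i = F ord0 + \sum_(i < n) F (shift1 i) + F ord_max.
Proof.
rewrite big_ord_recl big_ord_recr addnA.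
by congr (_ + _ + F _); apply: val_inj.
Qed.

Lemma inversionsE n (p : 'S_n) :
  inversions p = \sum_(i < n) \sum_(j < n) ((i < j) && (p j < p i)).
Proof.
rewrite /inversions -sum1dep_card big_mkcond pair_big /=.
by apply: eq_bigr => ij _; case: ifP.
Qed.

Lemma distnSS m n : `|m.+1 - n.+1| = `|m - n|.
Proof. by rewrite -addn1 -(addn1 n) distnDr. Qed.

Lemma porbit_morph (T U : finType) (s : {perm T}) (t : {perm U}) (f : T -> U) :
  (forall x, t (f x) = f (s x)) -> forall x, porbit t (f x) = f @: porbit s x.
Proof.
move=> tf x.
have tXf m : (t ^+ m)%g (f x) = f ((s ^+ m)%g x).
  by elim: m => [|m IHm]; rewrite ?expg0 ?perm1 // !expgSr !permM IHm tf.
apply/setP => y; apply/porbitP/imsetP => [[m ->] | [z /porbitP [m ->] ->]].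
  by exists ((s ^+ m)%g x); rewrite ?mem_porbit ?tXf.
by exists m; rewrite tXf.
Qed.

Lemma ncycles_le n (p : 'S_n) : ncycles p <= n.
Proof. by rewrite -{2}(card_ord n); apply: leq_imset_card. Qed.

Section Wrap.

Variables (k : nat) (pi : 'S_k.+1) (tau : 'S_k.+3).
Hypotheses (tau_ord0 : tau ord0 = ord_max) (tau_ord_max : tau ord_max = ord0)
  (tau_shift1 : forall i, tau (shift1 i) = shift1 (pi i)).

Lemma porbits_tau :
  porbits tau =
    porbit tau ord0 |: [set shift1 @: X | X : {set 'I_k.+1} in porbits pi].
Proof.
have porbit_shift1 := porbit_morph tau_shift1.
apply/setP => Y; rewrite !inE; apply/imsetP/orP => [[x _ ->] | ].
  have [-> | x_neq0] := eqVneq x ord0; first by left.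
  have [-> | x_neq_max] := eqVneq x ord_max.
    by left; rewrite -tau_ord0 -[tau ord0]/((tau ^+ 1)%g ord0) porbit_perm.
  by right; rewrite (shift1_onto x_neq0 x_neq_max) porbit_shift1; apply/imset_f/imset_f.
case=> [/eqP -> | /imsetP [X /imsetP [x _ ->] ->]]; first by exists ord0.
by exists (shift1 x); rewrite ?porbit_shift1.
Qed.

Lemma ncycles_tau : ncycles tau = (ncycles pi).+1.
Proof.
rewrite /ncycles porbits_tau cardsU1 card_imset; last first.
  exact/imset_inj/shift1_inj.
suff /negPf -> :
  porbit tau ord0 \notin [set shift1 @: X | X : {set 'I_k.+1} in porbits pi]
  by [].
apply/imsetP => -[X _ orbit0].
by have := porbit_id tau ord0; rewrite orbit0 => /imsetP [x _ /(congr1 val)].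
Qed.

Lemma reflength_tau : reflength tau = (reflength pi).+1.
Proof. by rewrite /reflength ncycles_tau subSS subSn // ncycles_le. Qed.

Lemma displacement_tau : displacement tau = displacement pi + (k.+2).*2.
Proof.
rewrite /displacement big_ord_shift1 tau_ord0 tau_ord_max.
rewrite [nat_of_ord ord0]/= [nat_of_ord ord_max]/= distn0 dist0n.
under eq_bigr => i _ do rewrite tau_shift1 !shift1E distnSS.
by rewrite addnAC addnn addnC.
Qed.

Lemma inversions_tau : inversions tau = inversions pi + (k.+1).*2.+1.
Proof.
have row_ord0 :
    \sum_(j < k.+3) ((ord0 : 'I_k.+3) < j) && (tau j < tau ord0) = k.+2.
  rewrite big_ord_shift1 !tau_ord0 tau_ord_max.
  under eq_bigr => j _ do rewrite tau_shift1 !shift1E /= ltnS ltn_ord.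
  by rewrite sum1_card card_ord ltnn addn1.
have row_ord_max :
    \sum_(j < k.+3) ((ord_max : 'I_k.+3) < j) && (tau j < tau ord_max) = 0.
  by apply: big1 => j _; rewrite ltnNge -ltnS ltn_ord.
have row_shift1 i : \sum_(j < k.+3) (shift1 i < j) && (tau j < tau (shift1 i))
    = \sum_(j < k.+1) (i < j) && (pi j < pi i) + 1.
  rewrite big_ord_shift1 tau_ord_max !tau_shift1.
  under eq_bigr => j _ do rewrite tau_shift1 !shift1E !ltnS.
  by rewrite !shift1E /= ltnS ltn_ord.
rewrite !inversionsE big_ord_shift1 row_ord0 row_ord_max.
under eq_bigr => i _ do rewrite row_shift1.
by rewrite big_split sum_nat_const card_ord muln1 addn0 addnCA addSn addnn.
Qed.

End Wrap.

Theorem lemma2p5 (k : nat) (pi : 'S_k.+1) (tau : 'S_k.+3)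
  (htau : forall i : 'I_k.+3,
     (tau i : nat) = if (i : nat) == 0 then k.+2
                     else if (i : nat) == k.+2 then 0
                     else (pi (inord i.-1) : nat).+1) :
  shallow pi = shallow tau.
Proof.
have tau_ord0 : tau ord0 = ord_max by apply/val_inj; rewrite /= htau.
have tau_ord_max : tau ord_max = ord0 by apply/val_inj; rewrite /= htau /= eqxx.
have tau_shift1 i : tau (shift1 i) = shift1 (pi i).
  by apply/val_inj; rewrite /= htau /= /bump !add1n eqSS ltn_eqF // inord_val.
rewrite /shallow (inversions_tau tau_ord0 tau_ord_max tau_shift1).
rewrite (reflength_tau tau_ord0 tau_shift1).
rewrite (displacement_tau tau_ord0 tau_ord_max tau_shift1).
have -> : inversions pi + (k.+1).*2.+1 + (reflength pi).+1
          = inversions pi + reflength pi + (k.+2).*2 by lia.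
by rewrite eqn_add2r.
Qed.
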